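(* Let $0<a<1$ and let $\Psi:\overline{\Omega}\times(0,+\infty)\to\mathbb{R}$ be a Hölder continuous function such that for each $x\in\Omega$ the map $s\mapsto\Psi(x,s)/s$ is strictly decreasing on $(0,+\infty)$. Assume $v,w\in C^2(\Omega)\cap C(\overline{\Omega})$ satisfy (a) $\Delta w+\Psi(x,w)+|\nabla w|^a\le0\le\Delta v+\Psi(x,v)+|\nabla v|^a$ in $\Omega$; (b) $v,w>0$ in $\Omega$ and $v<w$ on $\partial\Omega$. Then $v\le w$ in $\Omega$.
   Context: $\Omega\subset\mathbb{R}^N$ ($N\ge 2$) is a bounded domain with smooth boundary. *)

From HB Require Import structures.
From mathcomp Require Import all_boot all_order all_algebra.
From mathcomp Require Import all_classical all_reals all_analysis.
Set Implicit Arguments. Unset Strict Implicit. Unset Printing Implicit Defensive.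
Import Order.TTheory GRing.Theory Num.Theory.
Import numFieldNormedType.Exports.
Local Open Scope classical_set_scope.
Local Open Scope ring_scope.

Section Defs.
Variables (R : realType) (N : nat).
Notation V := 'rV[R]_N.

Definition ebase (i : 'I_N) : V := delta_mx 0 i.

Fixpoint D_list (vs : seq V) (f : V -> R) : V -> R :=
  match vs with
  | [::] => f
  | u :: us => 'D_u (D_list us f)
  end.

Definition Ck_on (k : nat) (A : set V) (f : V -> R) : Prop :=
  forall vs : seq V, (size vs <= k)%N -> forall x, A x ->
    {for x, continuous (D_list vs f)} /\
    ((size vs < k)%N -> forall u, derivable (D_list vs f) x u).

Definition smooth (f : V -> R) : Prop := forall k, Ck_on k setT f.

Definition bounded_domain (Om : set V) : Prop :=
  Om !=set0 /\ open Om /\ connected Om /\ bounded_set Om.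

Definition smooth_boundary (Om : set V) : Prop :=
  exists rho : V -> R, smooth rho /\ Om = [set x | rho x < 0] /\
    (forall x, rho x = 0 -> exists i, 'D_(ebase i) rho x != 0).

Definition boundary_of (Om : set V) : set V := closure Om `\` Om.

Definition laplacian (f : V -> R) (x : V) : R :=
  \sum_(i < N) 'D_(ebase i) ('D_(ebase i) f) x.

Definition grad_norm (f : V -> R) (x : V) : R :=
  Num.sqrt (\sum_(i < N) ('D_(ebase i) f x) ^+ 2).

Definition loc_holder_on (D : set (V * R)) (F : V -> R -> R) : Prop :=
  forall p, D p -> exists r : R, 0 < r /\ exists C alpha : R,
    0 <= C /\ 0 < alpha <= 1 /\
    forall q1 q2, D q1 -> D q2 ->
      `|q1.1 - p.1| < r -> `|q1.2 - p.2| < r ->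
      `|q2.1 - p.1| < r -> `|q2.2 - p.2| < r ->
      `|F q1.1 q1.2 - F q2.1 q2.2| <= C * powR (`|q1.1 - q2.1| + `|q1.2 - q2.2|) alpha.
End Defs.

From HB Require Import structures.
From mathcomp Require Import all_boot all_order all_algebra.
From mathcomp Require Import all_classical all_reals all_analysis.
Import Order.TTheory GRing.Theory Num.Theory.
Import numFieldNormedType.Exports.
Set Implicit Arguments.
Unset Strict Implicit.
Unset Printing Implicit Defensive.
Local Open Scope classical_set_scope.
Local Open Scope ring_scope.

(* Suppose w < v somewhere in Om.  Then lam := max_{closure Om} v / w exceeds 1
   and, since v < w on the boundary, is attained at an interior point x0.
   There lam w - v >= 0 touches 0, so grad v = lam grad w and
   Delta v <= lam Delta w at x0.  Because a < 1 and s |-> Psi(x0, s) / s is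
   strictly decreasing, |grad v|^a <= lam |grad w|^a and
   Psi(x0, v) < lam Psi(x0, w), so
   0 <= Delta v + Psi(x0, v) + |grad v|^a < lam (Delta w + Psi(x0, w) + |grad w|^a) <= 0. *)

Section LocalMinLine.
Variable R : realType.
Implicit Types g G : R -> R.

Lemma ball0_itv (d t : R) : ball 0 d t <-> t \in `]- d, d[.
Proof. by rewrite /ball /= sub0r normrN in_itv /= ltr_norml. Qed.

Lemma derive1_local_min g :
  (\forall t \near (0 : R), g 0 <= g t) -> (\forall t \near (0 : R), derivable g t 1) ->
  'D_1 g 0 = 0.
Proof.
move=> gmin gder.
have /nbhs_ballP[d /= d0 gd] : \forall t \near (0 : R), g 0 <= g t /\ derivable g t 1.
  by near=> t; split; near: t.
have in_ball t : t \in `]- d, d[ -> g 0 <= g t /\ derivable g t 1.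
  by move/ball0_itv; exact: gd.
apply: derive_val; apply: (@derive1_at_min _ g (- d) d).
- by rewrite ge0_cp // ltW.
- by move=> t /in_ball[].
- by apply/ball0_itv; exact: ballxx.
- by move=> t /in_ball[].
Unshelve. all: by end_near. Qed.

Lemma derive1_lt0_right G : G 0 = 0 -> derivable G 0 1 -> 'D_1 G 0 < 0 ->
  \forall t \near (0 : R), 0 < t -> G t < 0.
Proof.
move=> G00 dG DGlt; have /(_ (dnbhs_filter _)) quot_lt0 := cvgr_lt _ dG 0 DGlt.
have : nbhs (0 : R) (fun t => t != 0 -> _) := quot_lt0.
apply: filterS => t {}quot_lt0 t0.
move: (quot_lt0 (lt0r_neq0 t0)); rewrite /= G00 subr0 [t%:A]mulr1 addr0.
by rewrite pmulr_rlt0 ?invr_gt0.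
Qed.

Lemma derive2_local_min_ge0 g G :
  (\forall t \near (0 : R), g 0 <= g t) ->
  (\forall t \near (0 : R), derivable g t 1 /\ 'D_1 g t = G t) ->
  derivable G 0 1 -> 0 <= 'D_1 G 0.
Proof.
move=> gmin gder dG.
have G00 : G 0 = 0.
  rewrite -(nbhs_singleton gder).2; apply: derive1_local_min => //.
  by apply: filterS gder => t [].
rewrite leNgt; apply/negP => /(derive1_lt0_right G00 dG) Gneg.
have /nbhs_ballP[d /= d0 gd] : \forall t \near (0 : R),
    g 0 <= g t /\ (derivable g t 1 /\ 'D_1 g t = G t) /\ (0 < t -> G t < 0).
  by near=> t; split; [|split]; near: t.
have in_ball t : 0 <= t -> t <= d / 2 -> ball 0 d t.
  move=> t0 td; apply/ball0_itv; rewrite in_itv /=.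
  rewrite (lt_le_trans _ t0) ?oppr_lt0 //= (le_lt_trans td) //.
  by rewrite ltr_pdivrMr // ltr_pMr // ltr1n.
have h0 : 0 < d / 2 by rewrite divr_gt0.
have [c c_in mvt] : exists2 c, c \in `]0, d / 2[ & g (d / 2) - g 0 = G c * (d / 2 - 0).
  apply: MVT => // [t|].
    rewrite in_itv /= => /andP[t0 th].
    have [_ [[dt <-] _]] := gd t (in_ball t (ltW t0) (ltW th)).
    exact: DeriveDef.
  apply: continuous_in_subspaceT => t; rewrite inE /= in_itv /= => /andP[t0 th].
  have [_ [[dt _] _]] := gd t (in_ball t t0 th).
  exact/differentiable_continuous/derivable1_diffP.
move: c_in mvt; rewrite in_itv subr0 /= => /andP[c0 ch] mvt.
have [_ [_ Gc]] := gd c (in_ball c (ltW c0) (ltW ch)).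
have [gh _] := gd (d / 2) (in_ball _ (ltW h0) (lexx _)).
have : G c * (d / 2) < 0 by rewrite pmulr_llt0 // Gc.
by rewrite -mvt subr_lt0 ltNge gh.
Unshelve. all: by end_near. Qed.

End LocalMinLine.

Section LocalMinDirection.
Variables (R : realType) (V : normedModType R).
Implicit Types (f : V -> R) (x e : V).

Let line_quotient f x e t :
  (fun h : R => h^-1 *: (((fun s : R => f (s *: e + x)) \o shift t) (h *: 1)
       - f (t *: e + x))) =
  (fun h : R => h^-1 *: ((f \o shift (t *: e + x)) (h *: e) - f (t *: e + x))).
Proof.
apply/funext => h /=; congr (_ *: (f _ - _)).
by rewrite /shift /= scalerDl addrA [h *: 1]mulr1.
Qed.

Lemma derivable_line f x e t :
  derivable (fun s : R => f (s *: e + x)) t 1 <-> derivable f (t *: e + x) e.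
Proof. by rewrite /derivable line_quotient. Qed.

Lemma derive_line f x e t :
  'D_1 (fun s : R => f (s *: e + x)) t = 'D_e f (t *: e + x).
Proof. by rewrite /derive line_quotient. Qed.

Lemma near_line (P : V -> Prop) x e :
  (\forall y \near x, P y) -> \forall t \near (0 : R), P (t *: e + x).
Proof.
have line_cvg : (fun t : R => t *: e + x) @ (0 : R) --> x.
  rewrite -[X in _ --> X](add0r x) -[X in _ --> X + _](scale0r e).
  by apply: cvgD; [apply: cvgZl; exact: cvg_id | exact: cvg_cst].
exact: line_cvg.
Qed.

Lemma directional_local_min f Df x e :
  (\forall y \near x, f x <= f y) ->
  (\forall y \near x, derivable f y e /\ 'D_e f y = Df y) ->
  derivable Df x e -> 'D_e f x = 0 /\ 0 <= 'D_e Df x.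
Proof.
move=> fmin fder dDf.
have x0E : 0 *: e + x = x by rewrite scale0r add0r.
have gmin : \forall t \near (0 : R), f (0 *: e + x) <= f (t *: e + x).
  by rewrite x0E; exact: (near_line e fmin).
have gder : \forall t \near (0 : R), derivable (fun s : R => f (s *: e + x)) t 1 /\
    'D_1 (fun s : R => f (s *: e + x)) t = Df (t *: e + x).
  have := near_line e fder; apply: filterS => t [dt Dt].
  by rewrite derivable_line derive_line.
split.
  rewrite -[in LHS]x0E -derive_line; apply: derive1_local_min => //.
  by apply: filterS gder => t [].
rewrite -[in X in 'D_e _ X]x0E -derive_line.
by apply: derive2_local_min_ge0 gmin gder _; rewrite derivable_line x0E.
Qed.

End LocalMinDirection.

Lemma closure_ge0 (R : realType) (T : topologicalType) (A : set T) (f : T -> R) :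
  {within closure A, continuous f} -> (forall x, A x -> 0 < f x) ->
  forall x, closure A x -> 0 <= f x.
Proof.
move=> cf fA x clAx; rewrite leNgt; apply/negP => fx_lt0.
have : within (closure A) (nbhs x) (fun y => f y < 0).
  by rewrite (nbhs_subspace_in clAx); exact: cvgr_lt _ (cf x) 0 fx_lt0.
move=> /clAx[y [Ay /(_ (subset_closure Ay))]].
by rewrite ltNge ltW ?fA.
Qed.

Lemma bounded_closure (R : realType) (V : normedModType R) (A : set V) :
  bounded_set A -> bounded_set (closure A).
Proof.
rewrite /bounded_set /= /bounded_near; apply: filterS => M AM.
have A_ball : A `<=` closed_ball_ Num.Def.normr 0 M.
  by move=> y Ay; rewrite /closed_ball_ /= sub0r normrN; exact: AM.
move=> y /(closureS A_ball).
rewrite -(closure_id _).1; last exact: closed_closed_ball_.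
by rewrite /closed_ball_ /= sub0r normrN.
Qed.

Lemma powR_mul_le (R : realType) (lam g a : R) : 1 <= lam -> a <= 1 -> 0 <= g ->
  powR (lam * g) a <= lam * powR g a.
Proof.
move=> lam1 a1 g0; have lam0 : 0 <= lam by rewrite (le_trans _ lam1).
by rewrite powRM // ler_wpM2r ?powR_ge0 ?ler1_powR.
Qed.

Lemma ratio_decreasing_lt_scale (R : realType) (phi : R -> R) (lam s : R) :
  (forall s t, 0 < s -> s < t -> phi t / t < phi s / s) -> 1 < lam -> 0 < s ->
  phi (lam * s) < lam * phi s.
Proof.
move=> phi_decr lam1 s0; have lams0 : 0 < lam * s by rewrite mulr_gt0 // (lt_trans _ lam1).
have := phi_decr s (lam * s) s0; rewrite ltr_pMl // => /(_ lam1).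
by rewrite ltr_pdivrMr // mulrCA divfK ?gt_eqF.
Qed.

Section Comparison.
Variables (R : realType) (N : nat).
Notation V := 'rV[R]_N.
Implicit Types (Om : set V) (v w : V -> R).
Local Notation "''e_' i" := (@ebase R N i) (at level 8, i at level 2).

Lemma ratio_max_interior Om v w x :
  bounded_set Om ->
  {within closure Om, continuous v} -> {within closure Om, continuous w} ->
  (forall y, Om y -> 0 < v y /\ 0 < w y) ->
  (forall y, boundary_of Om y -> v y < w y) ->
  Om x -> w x < v x ->
  exists x0 lam, [/\ Om x0, 1 < lam, v x0 = lam * w x0 &
    forall y, Om y -> v y <= lam * w y].
Proof.
move=> Om_bd cv cw vw_gt0 vw_bd Ox wx_lt.
have v_ge0 : forall y, closure Om y -> 0 <= v y.
  by apply: closure_ge0 => // y /vw_gt0[].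
have w_gt0 y : closure Om y -> 0 < w y.
  move=> Oy; have [Oy'|nOy] := pselect (Om y); first by have [] := vw_gt0 y Oy'.
  exact: le_lt_trans (v_ge0 y Oy) (vw_bd y (conj Oy nOy)).
have c_ratio : {within closure Om, continuous (fun y => v y / w y)}.
  move: cv cw; rewrite !continuous_subspace_in => cv cw.
  rewrite continuous_subspace_in => y yO.
  apply: cvgM; first exact: cv.
  by apply: cvgV; [rewrite gt_eqF // w_gt0 //; rewrite inE in yO | exact: cw].
have [x0 /[!inE] Ox0 x0_max] : exists2 x0, x0 \in closure Om &
    forall y, y \in closure Om -> v y / w y <= v x0 / w x0.
  apply: compact_EVT_max => //; first by exists x; exact: subset_closure.
  apply: bounded_closed_compact; [exact: bounded_closure | exact: closed_closure].
have wx0 := w_gt0 _ Ox0.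
have lam1 : 1 < v x0 / w x0.
  apply: lt_le_trans (x0_max x _); last by rewrite inE; exact: subset_closure.
  by rewrite ltr_pdivlMr ?mul1r //; have [] := vw_gt0 x Ox.
exists x0, (v x0 / w x0); split => //.
- have [//|nOx0] := pselect (Om x0).
  have : v x0 / w x0 < 1 by rewrite ltr_pdivrMr ?mul1r // vw_bd.
  by rewrite ltNge ltW.
- by rewrite divfK // gt_eqF.
- move=> y Oy; have [_ wy] := vw_gt0 y Oy.
  by rewrite -ler_pdivrMr // x0_max // inE; exact: subset_closure.
Qed.

Lemma touching_derivatives Om v w lam x0 :
  open Om -> Ck_on 2 Om v -> Ck_on 2 Om w -> Om x0 ->
  v x0 = lam * w x0 -> (forall y, Om y -> v y <= lam * w y) ->
  forall e, 'D_e v x0 = lam * 'D_e w x0 /\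
            'D_e ('D_e v) x0 <= lam * 'D_e ('D_e w) x0.
Proof.
move=> Om_open Cv Cw Ox0 vx0 v_le e.
have near_Om : \forall y \near x0, Om y by exact: Om_open.
have dv y : Om y -> derivable v y e by move=> Oy; exact: (Cv [::] isT y Oy).2.
have dw y : Om y -> derivable w y e by move=> Oy; exact: (Cw [::] isT y Oy).2.
have ddv : derivable ('D_e v) x0 e by exact: (Cv [:: e] isT x0 Ox0).2.
have ddw : derivable ('D_e w) x0 e by exact: (Cw [:: e] isT x0 Ox0).2.
have D_gap y : Om y -> 'D_e (lam \*: w - v) y = lam * 'D_e w y - 'D_e v y.
  move=> Oy; have dlw := derivableZ (k := lam) (dw y Oy).
  by rewrite (deriveB dlw (dv y Oy)) (deriveZ lam (dw y Oy)).
have gap_min : \forall y \near x0, (lam \*: w - v) x0 <= (lam \*: w - v) y.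
  apply: filterS near_Om => y Oy.
  by rewrite !fctE vx0 subrr subr_ge0 v_le.
have gap_der : \forall y \near x0, derivable (lam \*: w - v) y e /\
    'D_e (lam \*: w - v) y = (lam \*: 'D_e w - 'D_e v) y.
  apply: filterS near_Om => y Oy; split; last exact: D_gap.
  by apply: derivableB; [apply: derivableZ; exact: dw | exact: dv].
have [] := directional_local_min gap_min gap_der
  (derivableB (derivableZ (k := lam) ddw) ddv).
rewrite D_gap // (deriveB (derivableZ (k := lam) ddw) ddv) (deriveZ lam ddw).
move=> /eqP; rewrite subr_eq0 => /eqP <-; rewrite subr_ge0.
by split.
Qed.

Lemma laplacian_le_scale v w lam x :
  (forall i, 'D_'e_ i ('D_'e_ i v) x <= lam * 'D_'e_ i ('D_'e_ i w) x) ->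
  laplacian v x <= lam * laplacian w x.
Proof. by move=> DDle; rewrite /laplacian mulr_sumr; apply: ler_sum => i _. Qed.

Lemma grad_norm_scale v w lam x : 0 <= lam ->
  (forall i, 'D_'e_ i v x = lam * 'D_'e_ i w x) ->
  grad_norm v x = lam * grad_norm w x.
Proof.
move=> lam0 DE; rewrite /grad_norm.
under eq_bigr => i _ do rewrite DE exprMn.
by rewrite -mulr_sumr sqrtrM ?sqr_ge0 // sqrtr_sqr ger0_norm.
Qed.

End Comparison.

Theorem lemma2p3 (R : realType) (N : nat) (Om : set 'rV[R]_N) (a : R)
    (Psi : 'rV[R]_N -> R -> R) (v w : 'rV[R]_N -> R) :
  (2 <= N)%N -> bounded_domain Om -> smooth_boundary Om ->
  0 < a < 1 ->
  loc_holder_on (closure Om `*` [set s : R | 0 < s]) Psi ->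
  (forall x, Om x -> forall s t : R, 0 < s -> s < t -> Psi x t / t < Psi x s / s) ->
  Ck_on 2 Om v -> Ck_on 2 Om w ->
  {within closure Om, continuous v} -> {within closure Om, continuous w} ->
  (forall x, Om x -> laplacian w x + Psi x (w x) + powR (grad_norm w x) a <= 0) ->
  (forall x, Om x -> 0 <= laplacian v x + Psi x (v x) + powR (grad_norm v x) a) ->
  (forall x, Om x -> 0 < v x /\ 0 < w x) ->
  (forall x, boundary_of Om x -> v x < w x) ->
  forall x, Om x -> v x <= w x.
Proof.
move=> _ [_ [Om_open [_ Om_bd]]] _ /andP[_ a1] _ Psi_decr Cv Cw cv cw w_super v_sub
  vw_gt0 vw_bd x Ox; rewrite leNgt; apply/negP => wx_lt.
have [x0 [lam [Ox0 lam1 vx0 v_le]]] :=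
  ratio_max_interior Om_bd cv cw vw_gt0 vw_bd Ox wx_lt.
have lam0 : 0 < lam by rewrite (lt_trans _ lam1).
have D_touch := touching_derivatives Om_open Cv Cw Ox0 vx0 v_le.
have lap_le : laplacian v x0 <= lam * laplacian w x0.
  by apply: laplacian_le_scale => i; exact: (D_touch _).2.
have grad_le : powR (grad_norm v x0) a <= lam * powR (grad_norm w x0) a.
  rewrite (grad_norm_scale (ltW lam0) (fun i => (D_touch _).1)).
  by apply: powR_mul_le; [exact: ltW | exact: ltW | exact: sqrtr_ge0].
have Psi_lt : Psi x0 (v x0) < lam * Psi x0 (w x0).
  rewrite vx0; apply: ratio_decreasing_lt_scale => //; first exact: Psi_decr.
  by have [] := vw_gt0 x0 Ox0.
have : lam * (laplacian w x0 + Psi x0 (w x0) + powR (grad_norm w x0) a) <= 0.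
  by rewrite pmulr_rle0 // w_super.
rewrite !mulrDr leNgt => /negP; apply; apply: le_lt_trans (v_sub x0 Ox0) _.
by rewrite ltr_leD // ler_ltD.
Qed.
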